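(* Let $x,y$ be distinct odd primes with Legendre symbol $\left(\frac{x}{y}\right)=-1$. Then $x$ is balanced modulo $y$.
   Context: For positive integers $n,m$ with $\gcd(n,m)=1$, $n$ is said to be not balanced modulo $m$ iff there exists an odd Dirichlet character $\chi$ modulo $m$ (i.e. $\chi(-1)=-1$) such that $\chi(n)=1$ and $\sum_{0<k<m/2}\chi(k)\neq0$; otherwise $n$ is balanced modulo $m$. *)

From mathcomp Require Import all_boot all_order all_algebra.
From mathcomp Require Import algC.
Set Implicit Arguments. Unset Strict Implicit. Unset Printing Implicit Defensive.
Import GRing.Theory Num.Theory.
Local Open Scope ring_scope.

Definition dirichlet_char (m : nat) (chi : nat -> algC) : Prop :=
  [/\ chi 1%N = 1,
      forall a b : nat, chi (a * b)%N = chi a * chi b,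
      forall a : nat, chi (a + m)%N = chi a
    & forall a : nat, (chi a != 0) = coprime a m].

(* chi(-1) = -1, where -1 is represented by m - 1 modulo m. *)
Definition odd_char (m : nat) (chi : nat -> algC) : Prop :=
  chi m.-1 = -1.

Definition half_sum (m : nat) (chi : nat -> algC) : algC :=
  \sum_(1 <= k < m | (k.*2 < m)%N) chi k.

Definition not_balanced (n m : nat) : Prop :=
  exists chi : nat -> algC,
    [/\ dirichlet_char m chi, odd_char m chi, chi n = 1 & half_sum m chi != 0].

Definition balanced (n m : nat) : Prop := ~ not_balanced n m.

(* a is a square mod p; every residue has a representative z < p. *)
Definition is_qr (a p : nat) : bool := [exists z : 'I_p, (z ^ 2 == a %[mod p])%N].

Definition legendre (a p : nat) : int :=
  if (p %| a)%N then 0%R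
  else if is_qr a p then 1%R else (-1)%R.

(* Euler's criterion: if y does not divide x and x is not a square modulo y,
   then x^((y-1)/2) is congruent to -1 modulo y.  A Dirichlet character chi
   modulo y with chi x = 1 therefore satisfies chi(-1) = chi(x)^((y-1)/2) = 1,
   so chi is even, and no odd character takes the value 1 at x. *)

From mathcomp Require Import all_boot all_order all_algebra.
From mathcomp Require Import algC finfield zify.
Set Implicit Arguments. Unset Strict Implicit. Unset Printing Implicit Defensive.
Import GRing.Theory Num.Theory.
Local Open Scope ring_scope.

Lemma expf_card_pred (F : finFieldType) (z : F) : z != 0 -> z ^+ #|F|.-1 = 1.
Proof.
move=> z_neq0; apply: (mulfI z_neq0).
by rewrite -exprS prednK ?(ltnW (finNzRing_gt1 F)) // mulr1; apply: expf_card.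
Qed.

Section EulerCriterion.

Variable p : nat.
Hypotheses (p_pr : prime p) (p_odd : odd p).

Let half_gt0 : (0 < p./2)%N.
Proof.
have p_gt2 : (2 < p)%N.
  by rewrite ltn_neqAle prime_gt1 // andbT; apply: contraTneq p_odd => <-.
by rewrite -double_gt0 odd_halfK //; lia.
Qed.

Let double_half_lt : (p./2.*2 < p)%N.
Proof. by rewrite odd_halfK // prednK ?prime_gt0. Qed.

Lemma eqFp_nat (a b : nat) : (a%:R == b%:R :> 'F_p) = (a == b %[mod p])%N.
Proof.
apply/eqP/eqP => [ab | ab]; last by rewrite -Fp_nat_mod // ab Fp_nat_mod.
by have := congr1 val ab; rewrite /= !val_Fp_nat.
Qed.

Lemma Fp_nat_neq0 (a : nat) : ~~ (p %| a)%N -> (a%:R : 'F_p) != 0.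
Proof. by apply: contra; rewrite -[X in _ == X](mulr0n 1) eqFp_nat mod0n. Qed.

Lemma Fp_fermat (z : 'F_p) : z != 0 -> z ^+ p.-1 = 1.
Proof. by move=> /expf_card_pred; rewrite card_Fp. Qed.

Lemma Fp_half_exp_sqr (i : nat) :
  (0 < i < p)%N -> ((i%:R : 'F_p) ^+ 2) ^+ p./2 = 1.
Proof.
move=> /andP[i_gt0 i_lt_p].
have i_neq0 : (i%:R : 'F_p) != 0.
  by apply: Fp_nat_neq0; apply/negP => /dvdn_leq; lia.
by rewrite -exprM mul2n odd_halfK // Fp_fermat.
Qed.

(* i^2 = j^2 forces i = j or i + j = 0 modulo p, and here 0 < i + j < p. *)
Lemma uniq_Fp_half_squares : uniq [seq (i%:R : 'F_p) ^+ 2 | i <- iota 1 p./2].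
Proof.
rewrite map_inj_in_uniq ?iota_uniq // => i j; rewrite !mem_iota => ij_i ij_j.
move=> /eqP; rewrite eqf_sqr => /orP[|].
  by rewrite eqFp_nat !modn_small; [move/eqP | lia | lia].
have ij_ndvd : ~~ (p %| i + j)%N by apply/negP => /dvdn_leq; lia.
by rewrite -addr_eq0 -natrD (negbTE (Fp_nat_neq0 ij_ndvd)).
Qed.

(* A nonresidue a with a^((p-1)/2) = 1 would give (p-1)/2 + 1 distinct roots
   of X^((p-1)/2) - 1: itself and the squares of 1, ..., (p-1)/2. *)
Lemma Fp_half_exp_eq1_qr (a : nat) : (a%:R : 'F_p) ^+ p./2 = 1 -> is_qr a p.
Proof.
move=> a_half; apply: contraT => a_nqr.
pose rs := (a%:R : 'F_p) :: [seq (i%:R : 'F_p) ^+ 2 | i <- iota 1 p./2].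
have : (size rs < size ('X^(p./2) - 1%:P : {poly 'F_p})%R)%N.
  apply: max_poly_roots; first by rewrite -size_poly_gt0 size_XnsubC.
    apply/allP => z; rewrite /root !hornerE subr_eq0 inE.
    case/orP=> [/eqP -> | ]; first exact/eqP.
    by move=> /mapP[i]; rewrite mem_iota => i_range ->; rewrite Fp_half_exp_sqr //; lia.
  rewrite /rs /= uniq_Fp_half_squares andbT; apply/mapP => -[i].
  rewrite mem_iota => i_range /eqP; rewrite eq_sym -natrX eqFp_nat => i_sqrt.
  have i_lt_p : (i < p)%N by lia.
  by move/negP: a_nqr; apply; apply/existsP; exists (Ordinal i_lt_p).
by rewrite size_XnsubC //= size_map size_iota ltnn.
Qed.

Lemma Fp_euler_nonresidue (a : nat) :
  ~~ (p %| a)%N -> ~~ is_qr a p -> (a%:R : 'F_p) ^+ p./2 = -1.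
Proof.
move=> a_ndvd a_nqr.
have : ((a%:R : 'F_p) ^+ p./2) ^+ 2 = 1.
  by rewrite -exprM muln2 odd_halfK // Fp_fermat // (Fp_nat_neq0 a_ndvd).
move/eqP; rewrite sqrf_eq1 => /orP[/eqP /Fp_half_exp_eq1_qr a_qr | /eqP //].
by rewrite a_qr in a_nqr.
Qed.

Lemma euler_nonresidue (a : nat) :
  ~~ (p %| a)%N -> ~~ is_qr a p -> (a ^ p./2 = p.-1 %[mod p])%N.
Proof.
move=> a_ndvd a_nqr; apply/eqP; rewrite -eqFp_nat natrX Fp_euler_nonresidue //.
by rewrite eq_sym -addr_eq0 natr1 prednK ?prime_gt0 // pchar_Fp_0.
Qed.

End EulerCriterion.

Section DirichletCharacter.

Variables (m : nat) (chi : nat -> algC).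
Hypothesis chi_dir : dirichlet_char m chi.

Lemma dirichlet_char_mod (a : nat) : chi a = chi (a %% m)%N.
Proof.
have [_ _ chi_per _] := chi_dir; rewrite {1}(divn_eq a m).
elim: (a %/ m)%N => [|k IHk]; first by rewrite mul0n add0n.
by rewrite mulSn -addnA addnC chi_per.
Qed.

Lemma dirichlet_charX (a n : nat) : chi (a ^ n)%N = chi a ^+ n.
Proof.
have [chi1 chiM _ _] := chi_dir.
elim: n => [|n IHn]; first by rewrite expn0 expr0 chi1.
by rewrite expnS chiM IHn exprS.
Qed.

Lemma odd_char_nonresidue_neq1 (a : nat) :
  prime m -> odd m -> ~~ (m %| a)%N -> ~~ is_qr a m -> odd_char m chi -> chi a != 1.
Proof.
move=> m_pr m_odd a_ndvd a_nqr chi_odd; apply/eqP => chi_a.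
have : chi (a ^ m./2)%N = -1.
  by rewrite dirichlet_char_mod euler_nonresidue // -dirichlet_char_mod.
by rewrite dirichlet_charX chi_a expr1n => /eqP; rewrite eq_sym eqNr oner_eq0.
Qed.

End DirichletCharacter.

Theorem lemma4p5 (x y : nat) :
  prime x -> prime y -> odd x -> odd y -> x <> y ->
  legendre x y = (-1)%R ->
  balanced x y.
Proof.
move=> _ y_pr _ y_odd _; rewrite /legendre.
case: ifP => [_ /eqP // | x_ndvd]; case: ifP => [_ /eqP // | x_nqr] _.
move=> [chi [chi_dir chi_odd chi_x _]].
have := odd_char_nonresidue_neq1 chi_dir y_pr y_odd (negbT x_ndvd) (negbT x_nqr) chi_odd.
by rewrite chi_x eqxx.
Qed.
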